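(* Let $m\ge 2$ and $j\in[1,m-1]$ be integers, let $V=\wedge^j\mathbb{C}^m$, let $G$ be the image of $\mathrm{SL}_m(\mathbb{C})$ in $\mathrm{GL}(V)$ under the $j$-th exterior power map, and let $\mathfrak g\subset\mathrm{End}(V)$ be its Lie algebra. Then $G\cap\mathfrak g\neq\emptyset$ (as subsets of $\mathrm{End}(V)$). *)

From HB Require Import structures.
From mathcomp Require Import all_boot all_order all_algebra all_field.
Set Implicit Arguments. Unset Strict Implicit. Unset Printing Implicit Defensive.
Import GRing.Theory Num.Theory.
Local Open Scope ring_scope.

(* Exterior powers modelled in the standard basis e_S = e_{s_1} /\ ... /\ e_{s_j}
   (s_1 < ... < s_j) of wedge^j C^m, indexed by j-element subsets S of 'I_m.
   Here m = n.+1 (so that 'I_m is inhabited). *)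

Definition jsub (m j : nat) := {S : {set 'I_m} | #|S| == j}.

(* a-th smallest element of S (S is enumerated in increasing order) *)
Definition sel (n j : nat) (S : {set 'I_n.+1}) (a : 'I_j) : 'I_n.+1 :=
  nth ord0 (enum S) a.

Definition EndV (R : Type) (n j : nat) := jsub n.+1 j -> jsub n.+1 j -> R.

Definition wedge (R : comNzRingType) (n j : nat) (A : 'M[R]_n.+1) : EndV R n j :=
  fun S T => \det (\matrix_(a < j, b < j) A (sel (val S) a) (sel (val T) b)).
Arguments wedge {R n} j A _ _.

(* Differential at the identity of the exterior power map:
   d/dt wedge^j (1 + t X) |_{t=0}, i.e. the coefficient of t in the
   polynomial matrix wedge^j (1 + t X). *)
Definition dwedge (R : comNzRingType) (n j : nat) (X : 'M[R]_n.+1) : EndV R n j :=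
  fun S T => (wedge j (1%:M + 'X *: map_mx polyC X) S T)`_1.
Arguments dwedge {R n} j X _ _.

(* Take g and X diagonal.  Then wedge^j g and its differential at X are diagonal in the
   basis (e_S), with entries prod_(i in S) g_i and sum_(i in S) X_i.  With
   g = diag(a, b, ..., b) and X = diag(y, x, ..., x) the condition wedge^j g = dwedge^j X
   becomes two scalar equations (0 in S or not), and together with det g = 1 and
   tr X = 0 the system is solved by x = b^j / j, y = -n x, a = b (j - n - 1) / j,
   where b is an (n+1)-th root of j / (j - n - 1); this needs j <> n + 1. *)

From HB Require Import structures.
From mathcomp Require Import all_boot all_order all_algebra all_field.
From mathcomp Require Import ring.
From Stdlib Require Import FunctionalExtensionality.
Set Implicit Arguments. Unset Strict Implicit. Unset Printing Implicit Defensive.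
Import GRing.Theory Num.Theory.
Local Open Scope ring_scope.

Lemma card_jsub m j (S : jsub m j) : #|val S| = j.
Proof. exact/eqP/(valP S). Qed.

Section Sel.

Variables (n j : nat) (S : {set 'I_n.+1}).
Hypothesis cardS : #|S| = j.

Lemma sel_inj : injective (@sel n j S).
Proof.
move=> a b /eqP; rewrite /sel nth_uniq ?enum_uniq -?cardE ?cardS ?ltn_ord //.
by move/eqP/val_inj.
Qed.

Lemma mem_sel (a : 'I_j) : sel S a \in S.
Proof. by rewrite /sel -mem_enum mem_nth // -cardE cardS. Qed.

Lemma sel_onto i : i \in S -> exists a : 'I_j, sel S a = i.
Proof.
move=> iS; have hi : (index i (enum S) < j)%N by rewrite -cardS cardE index_mem mem_enum.
by exists (Ordinal hi); rewrite /sel /= nth_index // mem_enum.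
Qed.

Lemma big_sel (R : Type) (idx : R) (op : Monoid.com_law idx) (F : 'I_n.+1 -> R) :
  \big[op/idx]_(a < j) F (sel S a) = \big[op/idx]_(i in S) F i.
Proof.
by rewrite -[RHS]big_enum (big_nth ord0) -cardE cardS big_mkord.
Qed.

End Sel.

Lemma wedge_diag_mx (R : comNzRingType) n j (d : 'rV[R]_n.+1) S T :
  wedge j (diag_mx d) S T = if S == T then \prod_(i in val S) d 0 i else 0.
Proof.
have [cardS cardT] := (card_jsub S, card_jsub T).
rewrite /wedge; case: eqP => [<- | neqST].
  have -> : \matrix_(a < j, b < j) diag_mx d (sel (val S) a) (sel (val S) b)
          = diag_mx (\row_a d 0 (sel (val S) a)).
    apply/matrixP => a b; rewrite !mxE (inj_eq (sel_inj cardS)).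
    by case: eqP => // ->.
  rewrite det_diag; under eq_bigr do rewrite mxE.
  exact: big_sel.
have /subsetPn [i iS iNT] : ~~ (val S \subset val T).
  apply/negP => subST; apply/neqST/val_inj/eqP.
  by rewrite eqEcard subST cardS cardT leqnn.
have [a ai] := sel_onto cardS iS; rewrite -{i iS}ai in iNT.
rewrite (expand_det_row _ a) big1 // => b _; rewrite !mxE.
by case: eqP => [eab | _]; [rewrite eab mem_sel in iNT | rewrite mulr0n mul0r].
Qed.

Lemma coef1_prod_1DZX (R : comNzRingType) (I : finType) (P : pred I) (c : I -> R) :
  (\prod_(i | P i) (1 + c i *: 'X))`_1 = \sum_(i | P i) c i.
Proof.
suff [] : (\prod_(i | P i) (1 + c i *: 'X))`_0 = 1
       /\ (\prod_(i | P i) (1 + c i *: 'X))`_1 = \sum_(i | P i) c i by [].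
elim/big_rec2: _ => [|i s p _ [p0 p1]]; first by rewrite !coef1.
rewrite mulrDl mul1r -scalerAl !coefD !coefZ !coefXM /= p0 p1.
by rewrite mulr0 addr0 mulr1 addrC.
Qed.

Lemma dwedge_diag_mx (R : comNzRingType) n j (c : 'rV[R]_n.+1) S T :
  dwedge j (diag_mx c) S T = if S == T then \sum_(i in val S) c 0 i else 0.
Proof.
rewrite /dwedge.
have -> : 1%:M + 'X *: map_mx polyC (diag_mx c) = diag_mx (\row_i (1 + c 0 i *: 'X)).
  apply/matrixP => i k; rewrite !mxE; case: eqP => _ /=.
    by rewrite !mulr1n -mul_polyC mulrC.
  by rewrite !mulr0n polyC0 mulr0 addr0.
rewrite wedge_diag_mx; case: eqP => _; last by rewrite coef0.
under eq_bigr do rewrite mxE.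
exact: coef1_prod_1DZX.
Qed.

Lemma wedge_diag_mx_eq_dwedge (R : comNzRingType) n j (d c : 'rV[R]_n.+1) :
  (forall S : jsub n.+1 j, \prod_(i in val S) d 0 i = \sum_(i in val S) c 0 i) ->
  wedge j (diag_mx d) = dwedge j (diag_mx c).
Proof.
move=> prod_eq_sum; do 2 apply: functional_extensionality => ?.
by rewrite wedge_diag_mx dwedge_diag_mx; case: eqP => // ->.
Qed.

Definition row_ord0 (R : Type) {n : nat} (u v : R) : 'rV[R]_n.+1 :=
  \row_i if i == ord0 then u else v.

Lemma big_row_ord0 (R : Type) (idx : R) (op : Monoid.com_law idx) n
    (u v : R) (A : {set 'I_n.+1}) :
  \big[op/idx]_(i in A) row_ord0 u v 0 i
    = if ord0 \in A then op u (iter #|A|.-1 (op v) idx) else iter #|A| (op v) idx.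
Proof.
have rowE i : i \in A :\ ord0 -> row_ord0 u v 0 i = v.
  by rewrite in_setD1 mxE => /andP [/negbTE ->].
case: ifP => A0; last first.
  rewrite -big_const; apply: eq_bigr => i iA; apply: rowE.
  by rewrite in_setD1 iA andbT; apply: contraFN A0 => /eqP <-.
rewrite (big_setD1 _ A0) (eq_bigr _ rowE) big_const (cardsD1 ord0 A) A0.
by rewrite mxE eqxx.
Qed.

Lemma det_diag_row_ord0 (R : comNzRingType) n (u v : R) :
  \det (diag_mx (row_ord0 u v : 'rV_n.+1)) = u * v ^+ n.
Proof.
by rewrite det_diag -big_set /= big_row_ord0 cardsT card_ord inE iter_mulr_1.
Qed.

Lemma trace_diag_row_ord0 (R : comNzRingType) n (u v : R) :
  \tr (diag_mx (row_ord0 u v : 'rV_n.+1)) = u + v *+ n.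
Proof.
by rewrite mxtrace_diag -big_set /= big_row_ord0 cardsT card_ord inE iter_addr_0.
Qed.

Lemma diag_wedge_system_solvable (C : numClosedFieldType) n j :
    (0 < j)%N -> (j <= n)%N ->
  exists a b x y : C,
    [/\ a * b ^+ n = 1, y + x *+ n = 0,
        a * b ^+ j.-1 = y + x *+ j.-1 & b ^+ j = x *+ j].
Proof.
case: j => [//|k] _ le_kn.
have k1_neq0 : k.+1%:R != 0 :> C by rewrite pnatr_eq0.
have k_neq_n : k.+1%:R - n.+1%:R != 0 :> C.
  by rewrite subr_eq0 eqr_nat eqSS (ltn_eqF le_kn).
have [b bE] : exists b : C, b ^+ n.+1 = k.+1%:R / (k.+1%:R - n.+1%:R).
  by eexists; apply: rootCK.
pose x := b ^+ k.+1 / k.+1%:R.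
exists (b * (k%:R - n%:R) / k.+1%:R), b, x, (- (x *+ n)); rewrite {}/x.
split.
- have -> : b * (k%:R - n%:R) / k.+1%:R * b ^+ n
          = b ^+ n.+1 * ((k%:R - n%:R) / k.+1%:R) by rewrite exprS; ring.
  by rewrite bE; field; rewrite -!mulrS; apply/andP.
- exact: addNr.
- by rewrite exprS; field; rewrite -mulrS.
- by field; rewrite -mulrS.
Qed.

Theorem lemma8 (n j : nat) (hm : (1 <= n)%N) (hj1 : (1 <= j)%N) (hj2 : (j <= n)%N) :
  exists (g X : 'M[algC]_n.+1),
    \det g = 1 /\ \tr X = 0 /\ wedge j g = dwedge j X.
Proof.
have [a [b [x [y [detE trE mem0E nmem0E]]]]] := diag_wedge_system_solvable algC hj1 hj2.
exists (diag_mx (row_ord0 a b)), (diag_mx (row_ord0 y x)).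
rewrite det_diag_row_ord0 trace_diag_row_ord0; split; first exact: detE.
split; first exact: trE.
apply: wedge_diag_mx_eq_dwedge => S.
by rewrite !big_row_ord0 !iter_mulr_1 !iter_addr_0 card_jsub; case: ifP.
Qed.
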